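(* Let $\mathcal{A}\in\mathbb{R}^{n_1\times\cdots\times n_d}$ ($d\ge 2$) and $p\in\{1,\dots,d\}$, and let $\mathcal{G}^{(1)},\dots,\mathcal{G}^{(d)}$ be the cores output by the sparse TT conversion procedure described below applied to $(\mathcal{A},p)$. Then $\mathbf{L}(\mathcal{G}^{(k)})$ has orthonormal columns for every $k<p$, and $\mathbf{R}(\mathcal{G}^{(k)})^T$ has orthonormal columns for every $k>p$.
   Context: TT format: cores $\mathcal{G}^{(k)}\in\mathbb{R}^{r_{k-1}\times n_k\times r_k}$, $r_0=r_d=1$, represent the tensor with entries $\mathcal{G}^{(1)}(:,i_1,:)\cdots\mathcal{G}^{(d)}(:,i_d,:)$. For a core $\mathcal{G}\in\mathbb{R}^{a\times n\times b}$: $\mathbf{L}(\mathcal{G})\in\mathbb{R}^{an\times b}$, $\mathbf{L}(\mathcal{G})_{(i-1)n+j,\,l}=\mathcal{G}(i,j,l)$; $\mathbf{R}(\mathcal{G})\in\mathbb{R}^{a\times nb}$, $\mathbf{R}(\mathcal{G})_{i,\,(j-1)b+l}=\mathcal{G}(i,j,l)$. A $p$-fiber of $\mathcal{A}$ is a vector $\mathcal{A}(i_1,\dots,i_{p-1},:,i_{p+1},\dots,i_d)\in\mathbb{R}^{n_p}$. $\operatorname{Depar}$: given $\mathbf{M}\in\mathbb{R}^{a\times b}$, process columns $j=1,\dots,b$ in order, keeping an ordered list $K$ of kept columns: if $\mathbf{M}_{:,j}=cK_i$ for some kept $K_i$ and scalar $c$ (first such $i$), set $T_{i,j}=c$; otherwise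 append $\mathbf{M}_{:,j}$ to $K$ and set $T_{|K|,j}=1$; other entries of $\mathbf{T}$ are zero. Output $\mathbf{N}=[K_1\cdots K_\beta]$, $\mathbf{T}\in\mathbb{R}^{\beta\times b}$. Sparse TT conversion procedure on $(\mathcal{A},p)$: enumerate the nonzero $p$-fibers as $j=1,\dots,R$, the $j$-th having fixed indices $(i^{(j)}_1,\dots,i^{(j)}_{p-1},i^{(j)}_{p+1},\dots,i^{(j)}_d)$ and value $\mathbf{v}_j\in\mathbb{R}^{n_p}$. Initialize a TT with ranks $r_0=r_d=1$, $r_k=R$ otherwise: for $k\neq p$, $\mathcal{G}^{(k)}(a,i,b)=1$ if $i=i^{(j)}_k$, where $j=b$ if $k=1$, $j=a$ if $k=d$, and $a=b=j$ is required if $1<k<d$; all other entries $0$. For $k=p$, $\mathcal{G}^{(p)}(a,i,b)=\mathbf{v}_j(i)$ with $j$ determined by the same rule, other entries $0$. Then set $\tilde r_0=1$; for $k=1,\dots,p-1$: $(\mathbf{N},\mathbf{T})=\operatorname{Depar}(\mathbf{L}(\mathcal{G}^{(k)}))$, $\mathbf{N}\in\mathbb{R}^{\tilde r_{k-1}n_k\times\tilde r_k}$; replace $\mathcal{G}^{(k)}$ by the core whose $\mathbf{L}$-unfolding is $\mathbf{N}$; replace each slice $\mathcal{G}^{(k+1)}(:,i,:)$ by $\mathbf{T}\mathcal{G}^{(k+1)}(:,i,:)$. Then set $\tilde r_d=1$; for $k=d,\dots,p+1$: $(\mathbf{N},\mathbf{T})=\operatorname{Depar}(\mathbf{R}(\mathcal{G}^{(k)})^T)$,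 $\mathbf{N}\in\mathbb{R}^{n_k\tilde r_k\times\tilde r_{k-1}}$; replace $\mathcal{G}^{(k)}$ by the core whose $\mathbf{R}$-unfolding is $\mathbf{N}^T$; replace each slice $\mathcal{G}^{(k-1)}(:,i,:)$ by $\mathcal{G}^{(k-1)}(:,i,:)\mathbf{T}^T$. Output the resulting cores. *)

(* Sparse-TT conversion procedure (Depar-based) of the paper,
   formalized with 0-based indices throughout. *)
From mathcomp Require Import all_boot all_order all_algebra.
From mathcomp Require Import reals.
Set Implicit Arguments. Unset Strict Implicit. Unset Printing Implicit Defensive.
Import Order.TTheory GRing.Theory Num.Theory.
Local Open Scope ring_scope.

Section SparseTT.
Variable R : realType.

Definition orthonormal_cols (m c : nat) (M : nat -> nat -> R) : Prop :=
  forall j1 j2, (j1 < c)%N -> (j2 < c)%N ->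
    \sum_(r < m) M r j1 * M r j2 = (j1 == j2)%:R.

(* A matrix is handled as the list of its columns (each a [seq R]). *)
Definition scalev (c : R) (w : seq R) : seq R := map ( *%R c) w.

(* candidate scalar c with v = c w : determined by the first nonzero entry
   of w; if w = 0 every c works and we take c = 1. *)
Definition coef (w v : seq R) : R :=
  let r0 := find (fun x => x != 0) w in
  if (r0 < size w)%N then nth 0 v r0 / nth 0 w r0 else 1.

Definition is_mult (w v : seq R) : bool := v == scalev (coef w v) w.

(* Returns the final kept list and, for each processed column j, the pair
   (i, T_{i,j}) describing the unique nonzero entry of column j of T. *)
Fixpoint depar_rec (K : seq (seq R)) (cols : seq (seq R))
  : seq (seq R) * seq (nat * R) :=
  match cols with
  | [::] => (K, [::])
  | v :: cs =>
      let i := find (fun w => is_mult w v) K in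
      if (i < size K)%N then
        let KT := depar_rec K cs in
        (KT.1, (i, coef (nth [::] K i) v) :: KT.2)
      else
        let KT := depar_rec (rcons K v) cs in
        (KT.1, (size K, 1) :: KT.2)
  end.

(* Depar(M) = (N, T) : N given by its list of columns K_1..K_beta,
   T given column-wise as above. *)
Definition depar (cols : seq (seq R)) := depar_rec [::] cols.

Definition Tent (T : seq (nat * R)) (a j : nat) : R :=
  let e := nth (0%N, 0) T j in if e.1 == a then e.2 else 0.

(* core G in R^{r1 x n x r2}, entry G(a,i,b) = cf a i b (0-based) *)
Record core := Core { cr1 : nat; cn : nat; cr2 : nat; cf : nat -> nat -> nat -> R }.
Definition core0 : core := Core 0 0 0 (fun _ _ _ => 0).

(* L(G) in R^{(r1 n) x r2}: L(G)_{i*n+j, l} = G(i,j,l) *)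
Definition Lunf (G : core) (r l : nat) : R := cf G (r %/ cn G) (r %% cn G) l.
Definition Lrows (G : core) : nat := (cr1 G * cn G)%N.
(* R(G)^T in R^{(n r2) x r1}: (R(G)^T)_{j*r2+l, i} = G(i,j,l) *)
Definition Rtunf (G : core) (r i : nat) : R := cf G i (r %/ cr2 G) (r %% cr2 G).
Definition Rtrows (G : core) : nat := (cn G * cr2 G)%N.

Definition Lcols (G : core) : seq (seq R) :=
  [seq [seq Lunf G r l | r <- iota 0 (Lrows G)] | l <- iota 0 (cr2 G)].
Definition Rtcols (G : core) : seq (seq R) :=
  [seq [seq Rtunf G r i | r <- iota 0 (Rtrows G)] | i <- iota 0 (cr1 G)].

(* dims n = [:: n_0; ...; n_(d-1)], d = size n; a tensor is a function on
   multi-indices (only valid multi-indices matter). *)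
(* fixed indices of a p-fiber: a multi-index whose p-th entry is set to 0 *)
Definition valid_fixed (n : seq nat) (p : nat) (s : seq nat) : Prop :=
  size s = size n /\ nth 0%N s p = 0%N /\
  forall k, (k < size n)%N -> k != p -> (nth 0%N s k < nth 0%N n k)%N.

Definition fiber (A : seq nat -> R) (p : nat) (s : seq nat) (i : nat) : R :=
  A (set_nth 0%N s p i).

Definition fiber_nonzero (n : seq nat) (A : seq nat -> R) (p : nat)
  (s : seq nat) : Prop :=
  exists2 i, (i < nth 0%N n p)%N & fiber A p s i != 0.

Definition fiber_enum (n : seq nat) (A : seq nat -> R) (p : nat)
  (fibs : seq (seq nat)) : Prop :=
  uniq fibs /\
  forall s, s \in fibs <-> (valid_fixed n p s /\ fiber_nonzero n A p s).

Definition init_core (n : seq nat) (A : seq nat -> R) (p : nat)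
  (fibs : seq (seq nat)) (k : nat) : core :=
  let d := size n in
  let Rk := size fibs in
  let a := if k == 0%N then 1%N else Rk in
  let b := if k == d.-1 then 1%N else Rk in
  Core a (nth 0%N n k) b (fun x i y =>
    (* the fiber index j determined by (x, y), if any *)
    let oj := if k == 0%N then Some y
              else if k == d.-1 then Some x
              else if x == y then Some x else None in
    match oj with
    | None => 0
    | Some j =>
        let s := nth [::] fibs j in
        if k == p then fiber A p s i
        else if i == nth 0%N s k then 1 else 0
    end).

Definition init_tt n A p fibs : seq core :=
  [seq init_core n A p fibs k | k <- iota 0 (size n)].

Definition fwd_step (G : seq core) (k : nat) : seq core :=
  let Gk := nth core0 G k in
  let NT := depar (Lcols Gk) in
  let N := NT.1 in let T := NT.2 in
  let beta := size N in
  let Gk' := Core (cr1 Gk) (cn Gk) beta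
               (fun i j l => nth 0 (nth [::] N l) (i * cn Gk + j)%N) in
  let Gk1 := nth core0 G k.+1 in
  let Gk1' := Core beta (cn Gk1) (cr2 Gk1)
               (fun a i b => \sum_(a0 < cr2 Gk) Tent T a a0 * cf Gk1 a0 i b) in
  set_nth core0 (set_nth core0 G k Gk') k.+1 Gk1'.

Definition bwd_step (G : seq core) (k : nat) : seq core :=
  let Gk := nth core0 G k in
  let NT := depar (Rtcols Gk) in
  let N := NT.1 in let T := NT.2 in
  let beta := size N in
  let Gk' := Core beta (cn Gk) (cr2 Gk)
               (fun i j l => nth 0 (nth [::] N i) (j * cr2 Gk + l)%N) in
  let Gkm := nth core0 G k.-1 in
  let Gkm' := Core (cr1 Gkm) (cn Gkm) beta
               (fun a i b' => \sum_(b < cr1 Gk) cf Gkm a i b * Tent T b' b) in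
  set_nth core0 (set_nth core0 G k Gk') k.-1 Gkm'.

Definition sparse_tt (n : seq nat) (A : seq nat -> R) (p : nat)
  (fibs : seq (seq nat)) : seq core :=
  let d := size n in
  let G1 := foldl fwd_step (init_tt n A p fibs) (iota 0 p) in
  foldl bwd_step G1 (rev (iota p.+1 (d.-1 - p))).

End SparseTT.

From mathcomp Require Import all_boot all_order all_algebra zify.
From mathcomp Require Import reals.
Set Implicit Arguments. Unset Strict Implicit. Unset Printing Implicit Defensive.
Import Order.TTheory GRing.Theory Num.Theory.
Local Open Scope ring_scope.

(* Each core is finalised by a single Depar step, and before that step its
   relevant unfolding consists of standard unit vectors.  Initially the
   k-th core (k <> p) selects, for the b-th nonzero fiber, the index
   i_k^(b): the first core has unit columns e_(i_1^(b)) in L(G^(1)), and the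
   interior cores are block diagonal, G(a,i,b) = [a = b][i = i_k^(b)].
   Depar of unit vectors keeps each distinct one once, so N has orthonormal
   columns, and T has a single 1 per column, at the kept copy of that
   column.  Multiplying the next (block-diagonal, untouched) core by T thus
   yields again a core whose L-unfolding has unit columns, now at the rows
   (T-position of b, i_(k+1)^(b)), and the forward sweep propagates the
   shape up to core p.  The backward sweep is the mirror image with R(G)^T,
   and a step only rewrites the two cores it acts on, so no finalised core
   is touched again. *)

Lemma ltn_mulnD_mul c s q r : (c < r)%N -> (s < q)%N -> (c * q + s < r * q)%N.
Proof.
move=> c_lt s_lt; have q_gt0 : (0 < q)%N by apply: leq_ltn_trans s_lt.
by rewrite -ltn_divLR // divnMDl // divn_small // addn0.
Qed.

Lemma eqn_divmod r c s q : (s < q)%N ->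
  ((r == c * q + s) = (r %/ q == c) && (r %% q == s))%N.
Proof.
move=> s_lt; have q_gt0 : (0 < q)%N by apply: leq_ltn_trans s_lt.
apply/eqP/andP => [->|[/eqP <- /eqP <-]]; last by rewrite -divn_eq.
by rewrite divnMDl // modnMDl divn_small // addn0 modn_small.
Qed.

Lemma nth_foldl_untouched (T : Type) (x0 : T) (f : seq T -> nat -> seq T)
    (untouched : nat -> nat -> bool) :
  (forall G s k, untouched s k -> nth x0 (f G s) k = nth x0 G k) ->
  forall ss G k, all (untouched^~ k) ss -> nth x0 (foldl f G ss) k = nth x0 G k.
Proof.
by move=> f_nth; elim=> [|s ss IH] G k //= /andP[s_k ss_k]; rewrite IH // f_nth.
Qed.

Section DeparUnitVectors.
Variable R : realType.

Definition delta_seq (m u : nat) : seq R := mkseq (fun r => (r == u)%:R) m.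

Lemma size_delta_seq m u : size (delta_seq m u) = m.
Proof. exact: size_mkseq. Qed.

Lemma nth_delta_seq m u r : (r < m)%N -> nth 0 (delta_seq m u) r = (r == u)%:R.
Proof. exact: nth_mkseq. Qed.

Lemma sum_delta_mul m j (F : nat -> R) :
  (j < m)%N -> \sum_(i < m) (i == j :> nat)%:R * F i = F j.
Proof.
move=> j_lt; transitivity (\sum_(i < m | i == j :> nat) F i).
  by rewrite [RHS]big_mkcond; apply: eq_bigr => i _; case: eqP; rewrite ?mul1r ?mul0r.
by rewrite big_ord1_eq j_lt.
Qed.

Lemma find_delta_seq m u : (u < m)%N -> find (fun x => x != 0) (delta_seq m u) = u.
Proof.
move=> u_lt; case: findP => [/hasPn delta_eq0 | i i_lt nz_i _].
  have u_in : nth 0 (delta_seq m u) u \in delta_seq m u by rewrite mem_nth ?size_delta_seq.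
  by move: (delta_eq0 _ u_in); rewrite nth_delta_seq // eqxx oner_neq0.
rewrite size_delta_seq in i_lt; move: (nz_i 0); rewrite nth_delta_seq //.
by have [//|_] := eqVneq i u; rewrite /= mulr0n eqxx.
Qed.

Lemma coef_delta_seq m u v : (u < m)%N -> coef (delta_seq m u) v = nth 0 v u.
Proof.
move=> u_lt.
by rewrite /coef find_delta_seq // size_delta_seq u_lt nth_delta_seq // eqxx divr1.
Qed.

Lemma is_mult_delta_seq m u v : (u < m)%N -> (v < m)%N ->
  is_mult (delta_seq m u) (delta_seq m v) = (u == v).
Proof.
move=> u_lt v_lt; rewrite /is_mult coef_delta_seq // nth_delta_seq //.
case: (eqVneq u v) => [->|u_neq_v].
  by apply/eqP; rewrite /= mulr1n /scalev (eq_map (@mul1r R)) map_id.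
apply: negbTE; apply/eqP => /(congr1 (nth 0 ^~ v)).
rewrite nth_delta_seq // eqxx /scalev (nth_map 0) ?size_delta_seq // nth_delta_seq //.
by rewrite mul0r => /eqP; rewrite oner_eq0.
Qed.

Lemma depar_rec_delta_seq m ks us : uniq ks -> all (fun u => u < m)%N (ks ++ us) ->
  exists2 ks', {subset ks' <= us} &
    [/\ uniq (ks ++ ks'), {subset us <= ks ++ ks'} &
        depar_rec [seq delta_seq m u | u <- ks] [seq delta_seq m u | u <- us] =
        ([seq delta_seq m u | u <- ks ++ ks'],
         [seq (index u (ks ++ ks'), 1) | u <- us])].
Proof.
elim: us ks => [|u us IH] ks uniq_ks; first by exists [::] => //; rewrite cats0.
rewrite all_cat /= => /and3P[ks_lt u_lt us_lt].
have find_u : find (fun w => is_mult w (delta_seq m u)) [seq delta_seq m w | w <- ks]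
              = index u ks.
  rewrite find_map; apply: eq_in_find => w w_ks /=.
  by rewrite is_mult_delta_seq // (allP ks_lt).
rewrite /= find_u size_map index_mem.
have [u_ks | u_ks] := boolP (u \in ks).
  have [|ks' sub_us [uniq' sub' ->]] := IH ks uniq_ks; first by rewrite all_cat ks_lt.
  exists ks' => [w /sub_us|]; first by rewrite in_cons orbC => ->.
  split => // [w|]; first by rewrite in_cons => /orP[/eqP ->|/sub'] //; rewrite mem_cat u_ks.
  rewrite (nth_map 0%N) ?index_mem // nth_index // coef_delta_seq //.
  by rewrite nth_delta_seq // eqxx index_cat u_ks.
have := IH (rcons ks u); rewrite rcons_uniq u_ks uniq_ks cat_rcons all_cat ks_lt /= u_lt.
case=> // ks' sub_us [uniq' sub' eq_rec]; rewrite cat_rcons in uniq' sub' eq_rec.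
exists (u :: ks') => [w|]; first by rewrite !in_cons => /orP[->|/sub_us ->]; rewrite ?orbT.
split => // [w|]; first by rewrite in_cons => /orP[/eqP ->|/sub'] //; rewrite mem_cat mem_head orbT.
by rewrite -map_rcons eq_rec index_cat (negbTE u_ks) /= eqxx addn0.
Qed.

Definition cols_of m c (M : nat -> nat -> R) : seq (seq R) :=
  [seq [seq M r l | r <- iota 0 m] | l <- iota 0 c].

Definition unit_cols m c (M : nat -> nat -> R) (pos : nat -> nat) : Prop :=
  forall l, (l < c)%N -> (pos l < m)%N /\ forall r, (r < m)%N -> M r l = (r == pos l)%:R.

Lemma depar_unit_cols m c M pos : unit_cols m c M pos ->
  exists ks, [/\ uniq ks, all (fun u => u < m)%N ks, (forall l, l < c -> pos l \in ks)%N &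
    depar (cols_of m c M) =
    ([seq delta_seq m u | u <- ks], [seq (index (pos l) ks, 1) | l <- iota 0 c])].
Proof.
move=> unitM.
have cols_delta : cols_of m c M = [seq delta_seq m u | u <- [seq pos l | l <- iota 0 c]].
  rewrite -map_comp; apply/eq_in_map => l; rewrite mem_iota add0n => /andP[_ /unitM[_ M_l]].
  by rewrite /delta_seq /mkseq; apply/eq_in_map => r; rewrite mem_iota add0n => /andP[_ /M_l].
have us_lt : all (fun u => u < m)%N [seq pos l | l <- iota 0 c].
  by apply/allP => u /mapP[l]; rewrite mem_iota add0n => /andP[_ /unitM[pos_lt _]] ->.
have [ks sub_us [uniq_ks sub_ks eq_ks]] := depar_rec_delta_seq (ks := [::]) isT us_lt.
exists ks; split => //.
- by apply/allP => u /sub_us /(allP us_lt).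
- by move=> l l_lt; apply/sub_ks/map_f; rewrite mem_iota.
- by rewrite /depar cols_delta eq_ks -map_comp.
Qed.

Lemma Tent_index ks c (pos : nat -> nat) a l : (l < c)%N ->
  Tent [seq (index (pos l) ks, 1%R : R) | l <- iota 0 c] a l = (a == index (pos l) ks)%:R.
Proof.
by move=> l_lt; rewrite /Tent (nth_map 0%N) ?size_iota // nth_iota //= eq_sym; case: eqP.
Qed.

Lemma orthonormal_cols_delta_seq m ks : uniq ks -> all (fun u => u < m)%N ks ->
  orthonormal_cols m (size ks) (fun r l => nth 0 (nth [::] [seq delta_seq m u | u <- ks] l) r).
Proof.
move=> uniq_ks ks_lt j1 j2 j1_lt j2_lt; rewrite !(nth_map 0%N) //.
under eq_bigr => r _ do rewrite !nth_delta_seq ?ltn_ord //.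
by rewrite (sum_delta_mul (fun r => (r == nth 0%N ks j2)%:R)) ?(allP ks_lt) ?mem_nth // nth_uniq.
Qed.

End DeparUnitVectors.

Section CoreSteps.
Variable R : realType.
Implicit Types (G : seq (core R)) (C : core R).
Local Notation nth_core := (nth (core0 R)).

Definition left_orthonormal C := orthonormal_cols (Lrows C) (cr2 C) (Lunf C).
Definition right_orthonormal C := orthonormal_cols (Rtrows C) (cr1 C) (Rtunf C).
Definition left_unit_cols C := unit_cols (Lrows C) (cr2 C) (Lunf C).
Definition right_unit_cols C := unit_cols (Rtrows C) (cr1 C) (Rtunf C).

Definition diag_core C (sel : nat -> nat) : Prop :=
  [/\ cr1 C = cr2 C, forall b, (b < cr2 C)%N -> (sel b < cn C)%N &
      forall a i b, (a < cr1 C)%N -> (i < cn C)%N -> (b < cr2 C)%N ->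
        cf C a i b = (a == b)%:R * (i == sel b)%:R].

Lemma nth_fwd_step_untouched G s k :
  (k != s) && (k != s.+1) -> nth_core (fwd_step G s) k = nth_core G k.
Proof.
case/andP=> ks ks1.
by rewrite /fwd_step /= nth_set_nth /= (negbTE ks1) nth_set_nth /= (negbTE ks).
Qed.

Lemma nth_bwd_step_untouched G s k :
  (k != s) && (k != s.-1) -> nth_core (bwd_step G s) k = nth_core G k.
Proof.
case/andP=> ks ks1.
by rewrite /bwd_step /= nth_set_nth /= (negbTE ks1) nth_set_nth /= (negbTE ks).
Qed.

Lemma left_orthonormal_fwd_step G k pos :
  left_unit_cols (nth_core G k) pos -> left_orthonormal (nth_core (fwd_step G k) k).
Proof.
move=> unitG; have [ks [uniq_ks ks_lt _ eq_depar]] := depar_unit_cols unitG.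
rewrite /fwd_step /= nth_set_nth /= ltn_eqF // nth_set_nth /= eqxx eq_depar.
rewrite /left_orthonormal /= size_map => j1 j2 j1_lt j2_lt.
under eq_bigr => r _ do rewrite /Lunf /= -!divn_eq.
exact: orthonormal_cols_delta_seq.
Qed.

Lemma right_orthonormal_bwd_step G k pos : (0 < k)%N ->
  right_unit_cols (nth_core G k) pos -> right_orthonormal (nth_core (bwd_step G k) k).
Proof.
move=> k_gt0 unitG; have [ks [uniq_ks ks_lt _ eq_depar]] := depar_unit_cols unitG.
have k_neq : (k == k.-1) = false by rewrite gtn_eqF // ltn_predL.
rewrite /bwd_step /= nth_set_nth /= k_neq nth_set_nth /= eqxx eq_depar.
rewrite /right_orthonormal /= size_map => j1 j2 j1_lt j2_lt.
under eq_bigr => r _ do rewrite /Rtunf /= -!divn_eq.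
exact: orthonormal_cols_delta_seq.
Qed.

Lemma left_unit_cols_fwd_step G k pos sel :
  left_unit_cols (nth_core G k) pos -> diag_core (nth_core G k.+1) sel ->
  cr1 (nth_core G k.+1) = cr2 (nth_core G k) ->
  let C := nth_core (fwd_step G k) k.+1 in
  cr2 C = cr2 (nth_core G k.+1) /\ exists pos', left_unit_cols C pos'.
Proof.
set Gk := nth_core G k; set Gk1 := nth_core G k.+1.
move=> unitG [r12 sel_lt diag] r1.
have [ks [_ _ pos_ks eq_depar]] := depar_unit_cols unitG.
rewrite /fwd_step /= nth_set_nth /= eqxx -/Gk -/Gk1 eq_depar size_map; split=> //.
exists (fun b => index (pos b) ks * cn Gk1 + sel b)%N => b b_lt /=.
have b_lt' : (b < cr2 Gk)%N by rewrite -r1 r12.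
have q_gt0 : (0 < cn Gk1)%N by apply: leq_ltn_trans (sel_lt b b_lt).
split=> [|r r_lt]; first by rewrite /Lrows /= ltn_mulnD_mul ?index_mem ?pos_ks ?sel_lt.
rewrite /Lunf /=.
under eq_bigr => a0 _ do rewrite diag ?r1 ?ltn_pmod // mulrCA.
rewrite (sum_delta_mul (fun a0 => Tent _ _ a0 * _)) // Tent_index //.
by rewrite -natrM mulnb -eqn_divmod ?sel_lt.
Qed.

Lemma right_unit_cols_bwd_step G k pos sel :
  right_unit_cols (nth_core G k) pos -> diag_core (nth_core G k.-1) sel ->
  cr2 (nth_core G k.-1) = cr1 (nth_core G k) ->
  let C := nth_core (bwd_step G k) k.-1 in
  cr1 C = cr1 (nth_core G k.-1) /\ exists pos', right_unit_cols C pos'.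
Proof.
set Gk := nth_core G k; set Gkm := nth_core G k.-1.
move=> unitG [r12 sel_lt diag] r2.
have [ks [_ _ pos_ks eq_depar]] := depar_unit_cols unitG.
rewrite /bwd_step /= nth_set_nth /= eqxx -/Gk -/Gkm eq_depar size_map; split=> //.
exists (fun a => sel a * size ks + index (pos a) ks)%N => a a_lt /=.
have a_lt' : (a < cr1 Gk)%N by rewrite -r2 -r12.
have idx_lt : (index (pos a) ks < size ks)%N by rewrite index_mem pos_ks.
have q_gt0 : (0 < size ks)%N by apply: leq_ltn_trans idx_lt.
split=> [|r r_lt]; first by rewrite /Rtrows /= ltn_mulnD_mul ?sel_lt // -r12.
have i_lt : (r %/ size ks < cn Gkm)%N by rewrite ltn_divLR.
rewrite /Rtunf /=.
under eq_bigr => b _ do rewrite diag ?r2 // -mulrA eq_sym.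
rewrite (sum_delta_mul (fun b => (r %/ size ks == sel b)%N%:R * Tent _ _ b)) //.
by rewrite Tent_index //  -natrM mulnb -eqn_divmod.
Qed.

Lemma nth_foldl_fwd_step G ss k : all (fun s => (k != s) && (k != s.+1)) ss ->
  nth_core (foldl (@fwd_step R) G ss) k = nth_core G k.
Proof. exact: (nth_foldl_untouched (@nth_fwd_step_untouched)). Qed.

Lemma nth_foldl_bwd_step G ss k : all (fun s => (k != s) && (k != s.-1)) ss ->
  nth_core (foldl (@bwd_step R) G ss) k = nth_core G k.
Proof. exact: (nth_foldl_untouched (@nth_bwd_step_untouched)). Qed.

End CoreSteps.

Section Sweeps.
Variables (R : realType) (n : seq nat) (A : seq nat -> R) (p : nat) (fibs : seq (seq nat)).
Hypothesis p_lt : (p < size n)%N.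
Hypothesis enum_fibs : fiber_enum n A p fibs.

Local Notation d := (size n).
Local Notation nth_core := (nth (core0 R)).
Local Notation init k := (init_core n A p fibs k).
Local Notation sel k := (fun b => nth 0%N (nth [::] fibs b) k).

Lemma fiber_index_lt b k : (b < size fibs)%N -> (k < d)%N -> k != p ->
  (nth 0%N (nth [::] fibs b) k < nth 0%N n k)%N.
Proof.
move=> b_lt k_lt k_neq; have [_ /(_ (nth [::] fibs b)) [fib_valid _]] := enum_fibs.
by have [[_ [_ ->]]] := fib_valid (mem_nth [::] b_lt).
Qed.

Lemma nth_init_tt k : (k < d)%N -> nth_core (init_tt n A p fibs) k = init k.
Proof. by move=> k_lt; rewrite /init_tt (nth_map 0%N) ?size_iota // nth_iota. Qed.

Lemma cr1_init_core k : (0 < k)%N -> cr1 (init k) = size fibs.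
Proof. by rewrite /init_core /= => /gtn_eqF ->. Qed.

Lemma cr2_init_core k : (k < d.-1)%N -> cr2 (init k) = size fibs.
Proof. by rewrite /init_core /= => /ltn_eqF ->. Qed.

Lemma diag_init_core k : (0 < k)%N -> (k < d.-1)%N -> k != p -> diag_core (init k) (sel k).
Proof.
move=> k_gt0 k_lt k_neq; rewrite /diag_core cr1_init_core // cr2_init_core //; split=> //.
  by move=> b b_lt; apply: fiber_index_lt => //; lia.
move=> a i b _ _ _; rewrite /init_core /= (gtn_eqF k_gt0) (ltn_eqF k_lt) (negbTE k_neq).
case: (eqVneq a b) => [->|_] /=; last by rewrite mul0r.
by rewrite mulr1n mul1r; case: (_ == _).
Qed.

Lemma left_unit_cols_init_core0 : (0 < p)%N -> left_unit_cols (init 0) (sel 0).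
Proof.
move=> p_gt0 b; have d1_neq0 : (0 == d.-1) = false by apply/eqP; lia.
rewrite /Lrows /Lunf /init_core /= d1_neq0 (ltn_eqF p_gt0) mul1n => b_lt.
split=> [|r r_lt]; first by apply: fiber_index_lt => //; lia.
by rewrite modn_small //; case: (_ == _).
Qed.

Lemma right_unit_cols_init_core_last : (p < d.-1)%N -> right_unit_cols (init d.-1) (sel d.-1).
Proof.
move=> p_lt' a; have d1_neq0 : (d.-1 == 0) = false by apply/eqP; lia.
rewrite /Rtrows /Rtunf /init_core /= eqxx d1_neq0 (gtn_eqF p_lt') muln1 => a_lt.
split=> [|r r_lt]; first by apply: fiber_index_lt => //; lia.
by rewrite divn1; case: (_ == _).
Qed.

Lemma fwd_sweep_left_orthonormal m : forall j G, (j + m <= p)%N ->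
  ((0 < m)%N -> cr2 (nth_core G j) = size fibs /\
                exists pos, left_unit_cols (nth_core G j) pos) ->
  (forall k, (j < k < j + m)%N -> nth_core G k = init k) ->
  forall k, (j <= k < j + m)%N ->
    left_orthonormal (nth_core (foldl (@fwd_step R) G (iota j m)) k).
Proof.
elim: m => [|m IH] j G jm_le unit_j init_mid k k_in /=; first lia.
have [r2_j [pos unit_pos]] := unit_j isT.
have [->|k_neq] := eqVneq k j.
  rewrite nth_foldl_fwd_step; first exact: left_orthonormal_fwd_step unit_pos.
  by apply/allP => s; rewrite mem_iota => s_in; lia.
apply: IH; [lia | move=> m_gt0 | move=> k' k'_in | lia].
  have init_j1 : nth_core G j.+1 = init j.+1 by apply: init_mid; lia.
  have diag_j1 : diag_core (nth_core G j.+1) (sel j.+1).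
    by rewrite init_j1; apply: diag_init_core; lia.
  have r1_j1 : cr1 (nth_core G j.+1) = cr2 (nth_core G j) by rewrite init_j1 cr1_init_core.
  have [-> unit_j1] := left_unit_cols_fwd_step unit_pos diag_j1 r1_j1.
  by split=> //; rewrite init_j1 cr2_init_core //; lia.
by rewrite nth_fwd_step_untouched; [apply: init_mid | ]; lia.
Qed.

Lemma bwd_sweep_right_orthonormal m : forall G, (p + m < d)%N ->
  ((0 < m)%N -> cr1 (nth_core G (p + m)) = size fibs /\
                exists pos, right_unit_cols (nth_core G (p + m)) pos) ->
  (forall k, (p < k < p + m)%N -> nth_core G k = init k) ->
  forall k, (p < k <= p + m)%N ->
    right_orthonormal (nth_core (foldl (@bwd_step R) G (rev (iota p.+1 m))) k).
Proof.
elim: m => [|m IH] G; first by move=> *; lia.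
have -> : rev (iota p.+1 m.+1) = (p + m).+1 :: rev (iota p.+1 m).
  by rewrite -[m.+1]addn1 iotaD rev_cat addSn.
rewrite addnS => pm_lt unit_top init_mid k k_in /=.
have [r1_top [pos unit_pos]] := unit_top isT.
have [->|k_neq] := eqVneq k (p + m).+1.
  rewrite nth_foldl_bwd_step; first exact: right_orthonormal_bwd_step unit_pos.
  by apply/allP => s; rewrite mem_rev mem_iota => s_in; lia.
apply: IH; [lia | move=> m_gt0 | move=> k' k'_in | lia].
  have init_top : nth_core G (p + m) = init (p + m) by apply: init_mid; lia.
  have diag_top : diag_core (nth_core G (p + m)) (sel (p + m)).
    by rewrite init_top; apply: diag_init_core; lia.
  have r2_top : cr2 (nth_core G (p + m)) = cr1 (nth_core G (p + m).+1).
    by rewrite init_top r1_top cr2_init_core //; lia.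
  have [-> unit_top'] := right_unit_cols_bwd_step unit_pos diag_top r2_top.
  by split=> //; rewrite init_top cr1_init_core //; lia.
by rewrite nth_bwd_step_untouched; [apply: init_mid | ]; lia.
Qed.

End Sweeps.

Theorem corollary2 (R : realType) (n : seq nat) (A : seq nat -> R) (p : nat)
    (fibs : seq (seq nat)) :
  (2 <= size n)%N -> (p < size n)%N -> fiber_enum n A p fibs ->
  let G := sparse_tt n A p fibs in
  (forall k, (k < p)%N ->
     let Gk := nth (core0 R) G k in
     orthonormal_cols (Lrows Gk) (cr2 Gk) (Lunf Gk)) /\
  (forall k, (p < k)%N -> (k < size n)%N ->
     let Gk := nth (core0 R) G k in
     orthonormal_cols (Rtrows Gk) (cr1 Gk) (Rtunf Gk)).
Proof.
move=> _ p_lt enum_fibs; rewrite /sparse_tt.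
set G0 := init_tt n A p fibs; set G1 := foldl (@fwd_step R) G0 (iota 0 p).
have G1_init k : (p < k < size n)%N -> nth (core0 R) G1 k = init_core n A p fibs k.
  move=> k_in; rewrite nth_foldl_fwd_step ?nth_init_tt //; first lia.
  by apply/allP => s; rewrite mem_iota => s_in; lia.
split=> [k k_lt | k p_k k_lt].
  rewrite nth_foldl_bwd_step; last first.
    by apply/allP => s; rewrite mem_rev mem_iota => s_in; lia.
  apply: (fwd_sweep_left_orthonormal p_lt enum_fibs (j := 0)) => // [p_gt0 | k' k'_in].
    rewrite nth_init_tt; last lia.
    split; first by rewrite cr2_init_core; lia.
    by eexists; apply: left_unit_cols_init_core0.
  by rewrite nth_init_tt //; lia.
apply: (bwd_sweep_right_orthonormal p_lt enum_fibs (m := (size n).-1 - p));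
  [lia | move=> m_gt0 | move=> k' k'_in | lia].
  have -> : (p + ((size n).-1 - p) = (size n).-1)%N by lia.
  rewrite G1_init; last lia.
  split; first by rewrite cr1_init_core; lia.
  by eexists; apply: right_unit_cols_init_core_last => //; lia.
by apply: G1_init; lia.
Qed.
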